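(* Let $N\ge2$ and $L=(a_1,\dots,a_N)\in\mathbb{N}_0^N$ with $a_1>0$, and let $H$ be the sequence defined by $H_n=1+\sum_{k=1}^{n-1}a_kH_{n-k}$ for $1\le n\le N+1$ and $H_{n+N}=a_1H_{n+N-1}+\cdots+a_{N-1}H_{n+1}+(1+a_N)H_n$ for all $n\in\mathbb{N}$. Let $\psi$ be the unique positive real zero of $g(x)=x^N-\sum_{k=1}^{N-1}a_kx^{N-k}-(1+a_N)$. Then there are positive real constants $\delta$ and $r$ with $r<1$ such that $H_n=\delta\psi^n+O(\psi^{rn})$ for $n\in\mathbb{N}$.
   Context: $\mathbb{N}_0=\mathbb{N}\cup\{0\}$. (The sequence $H$ is the fundamental sequence of the periodic Zeckendorf collection with principal maximal block $L$; $g$ has exactly one positive real zero, it is simple, and all other complex zeros have modulus less than $\psi$.) *)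

From Stdlib Require Import Reals Lra Lia.
Open Scope R_scope.

Fixpoint nsum_upto (f : nat -> nat) (n : nat) : nat :=
  match n with
  | O => O
  | S n' => (nsum_upto f n' + f n)%nat
  end.

Fixpoint rsum_upto (f : nat -> R) (n : nat) : R :=
  match n with
  | O => 0
  | S n' => rsum_upto f n' + f n
  end.

Definition gpoly (N : nat) (a : nat -> nat) (x : R) : R :=
  x ^ N - rsum_upto (fun k => INR (a k) * x ^ (N - k)) (N - 1)
  - (1 + INR (a N)).

(* Dividing by [psi ^ n] turns the recurrence into
   [u (n + N) = sum_k p_k u (n + N - k)], where [p_k = c_k / psi ^ k] and [c_k] are
   the coefficients of the recurrence; the weights are nonnegative, sum to 1 (this
   is [g psi = 0]) and have [p_1 > 0]. Each term is then a weighted average of the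
   previous [N], so the ranges of consecutive blocks of [N] terms are nested;
   moreover the weight [p_1] drags the next block away from the end of the range
   avoided by the last term, so the width shrinks by the factor
   [mu = 1 - p_1 ^ N / 2] per block. Hence [u n] converges to some
   [delta >= min (u 1, ..., u N) > 0] with error [O (mu ^ (n / N))], and
   [psi ^ n * mu ^ (n / N) = O (psi ^ (r n))] for some [r < 1]. *)

From Stdlib Require Import Arith Reals Lra Lia.
Open Scope R_scope.

Lemma rsum_ext f g n :
  (forall k, (1 <= k <= n)%nat -> f k = g k) -> rsum_upto f n = rsum_upto g n.
Proof.
  induction n as [|n IH]; intros hfg; simpl; [reflexivity|].
  rewrite IH, hfg by (try intros; try apply hfg; lia). reflexivity.
Qed.

Lemma rsum_le_compat f g n :
  (forall k, (1 <= k <= n)%nat -> f k <= g k) -> rsum_upto f n <= rsum_upto g n.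
Proof.
  induction n as [|n IH]; intros hfg; simpl; [lra|].
  apply Rplus_le_compat; [apply IH; intros; apply hfg | apply hfg]; lia.
Qed.

Lemma rsum_scal_l c f n : rsum_upto (fun k => c * f k) n = c * rsum_upto f n.
Proof. induction n as [|n IH]; simpl; [ring|]. rewrite IH; ring. Qed.

Lemma rsum_minus f g n :
  rsum_upto (fun k => f k - g k) n = rsum_upto f n - rsum_upto g n.
Proof. induction n as [|n IH]; simpl; [ring|]. rewrite IH; ring. Qed.

Lemma rsum_last f n : (1 <= n)%nat -> rsum_upto f n = rsum_upto f (n - 1) + f n.
Proof. intros hn. destruct n as [|n]; [lia|]. simpl. rewrite Nat.sub_0_r. reflexivity. Qed.

Lemma rsum_first_le f n :
  (1 <= n)%nat -> (forall k, (1 <= k <= n)%nat -> 0 <= f k) -> f 1%nat <= rsum_upto f n.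
Proof.
  induction n as [|n IH]; intros hn hf; [lia|].
  destruct n as [|n]; simpl in *; [lra|].
  assert (f 1%nat <= rsum_upto f (S n)) by (apply IH; [lia | intros; apply hf; lia]).
  assert (0 <= f (S (S n))) by (apply hf; lia).
  simpl in *. lra.
Qed.

Lemma INR_nsum_upto f n : INR (nsum_upto f n) = rsum_upto (fun k => INR (f k)) n.
Proof. induction n as [|n IH]; simpl; [reflexivity|]. rewrite plus_INR, IH. reflexivity. Qed.

Lemma pow_le_antimono x m n : 0 <= x <= 1 -> (m <= n)%nat -> x ^ n <= x ^ m.
Proof.
  intros hx hmn. replace n with (m + (n - m))%nat by lia. rewrite pow_add.
  assert (x ^ (n - m) <= 1) by (rewrite <- (pow1 (n - m)); apply pow_incr; lra).
  assert (0 <= x ^ m) by (apply pow_le; lra).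
  assert (0 <= x ^ (n - m)) by (apply pow_le; lra).
  nra.
Qed.

Lemma pow_add_sub (x : R) k m : (k <= m)%nat -> x ^ m = x ^ k * x ^ (m - k).
Proof. intros hkm. rewrite <- pow_add. f_equal. lia. Qed.

Lemma finite_pos_bounds (u : nat -> R) m :
  (forall i, (1 <= i <= m)%nat -> 0 < u i) ->
  exists lo hi, 0 < lo /\ forall i, (1 <= i <= m)%nat -> lo <= u i <= hi.
Proof.
  induction m as [|m IH]; intros hpos.
  - exists 1, 0. split; [lra | intros; lia].
  - destruct IH as (lo & hi & hlo & hb); [intros; apply hpos; lia|].
    exists (Rmin lo (u (S m))), (Rmax hi (u (S m))). split.
    { apply Rmin_glb_lt; [assumption | apply hpos; lia]. }
    intros i hi_i. destruct (Nat.eq_dec i (S m)) as [-> | ne].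
    + split; [apply Rmin_r | apply Rmax_r].
    + destruct (hb i ltac:(lia)). split.
      * apply Rle_trans with lo; [apply Rmin_l | assumption].
      * apply Rle_trans with hi; [assumption | apply Rmax_l].
Qed.

Lemma squeezed_limit (u : nat -> R) (s : nat -> nat) (mu D lo0 : R) :
  0 <= mu < 1 -> 0 <= D ->
  (forall j, exists lo hi, lo0 <= lo /\ hi - lo <= mu ^ j * D /\
     forall i, (s j <= i)%nat -> lo <= u i <= hi) ->
  exists d, lo0 <= d /\ forall j i, (s j <= i)%nat -> Rabs (u i - d) <= mu ^ j * D.
Proof.
  intros hmu hD hsq.
  assert (cauchy : Cauchy_crit u).
  { intros eps heps.
    destruct (pow_lt_1_zero mu ltac:(rewrite Rabs_right; lra) (eps / (D + 1))) as [K hK].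
    { apply Rdiv_lt_0_compat; lra. }
    specialize (hK K (le_n _)). rewrite Rabs_right in hK by (apply Rle_ge, pow_le; lra).
    assert (small : mu ^ K * D < eps).
    { assert (eps / (D + 1) * (D + 1) = eps) by (field; lra).
      assert (0 <= mu ^ K) by (apply pow_le; lra). nra. }
    destruct (hsq K) as (lo & hi & _ & hwidth & hin).
    exists (s K). intros n m hn hm. unfold Rdist.
    destruct (hin n hn), (hin m hm). apply Rabs_def1; lra. }
  destruct (R_complete u cauchy) as [d hd].
  assert (near : forall eps, 0 < eps -> forall i, exists k, (i <= k)%nat /\ Rabs (u k - d) < eps).
  { intros eps heps i. destruct (hd eps heps) as [K hK].
    exists (Nat.max i K). split; [lia|]. apply hK. lia. }
  exists d. split.
  - apply Rle_plus_epsilon. intros eps heps.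
    destruct (hsq 0%nat) as (lo & hi & hlo & _ & hin).
    destruct (near eps heps (s 0%nat)) as (k & hk & hdk).
    destruct (hin k hk). apply Rabs_def2 in hdk. lra.
  - intros j i hi_j. apply Rle_plus_epsilon. intros eps heps.
    destruct (hsq j) as (lo & hi & _ & hwidth & hin).
    destruct (near eps heps (Nat.max i (s j))) as (k & hk & hdk).
    destruct (hin i hi_j), (hin k ltac:(lia)). apply Rabs_def2 in hdk.
    apply Rabs_le. lra.
Qed.

Definition avg_rec (N : nat) (p u : nat -> R) : Prop :=
  forall m, (N + 1 <= m)%nat -> u m = rsum_upto (fun k => p k * u (m - k)%nat) N.

Section AveragingRecurrence.
Variables (N : nat) (p : nat -> R).
Hypothesis N_pos : (1 <= N)%nat.
Hypothesis p_nonneg : forall k, (1 <= k <= N)%nat -> 0 <= p k.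
Hypothesis p_sum : rsum_upto p N = 1.
Hypothesis p1_pos : 0 < p 1%nat.

Lemma p1_le_1 : p 1%nat <= 1.
Proof. rewrite <- p_sum. apply rsum_first_le; assumption. Qed.

Lemma wavg_const c : rsum_upto (fun k => p k * c) N = c.
Proof.
  rewrite (rsum_ext _ (fun k => c * p k)) by (intros; ring).
  rewrite rsum_scal_l, p_sum. ring.
Qed.

Lemma wavg_between x lo hi :
  (forall k, (1 <= k <= N)%nat -> lo <= x k <= hi) ->
  lo <= rsum_upto (fun k => p k * x k) N <= hi.
Proof.
  intros hx. rewrite <- (wavg_const lo) at 1. rewrite <- (wavg_const hi).
  split; apply rsum_le_compat; intros k hk;
    pose proof (hx k hk); pose proof (p_nonneg k hk); nra.
Qed.

Lemma wavg_sub_const x c :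
  rsum_upto (fun k => p k * x k) N - c = rsum_upto (fun k => p k * (x k - c)) N.
Proof.
  rewrite <- (wavg_const c) at 1. rewrite <- rsum_minus.
  apply rsum_ext. intros; ring.
Qed.

Lemma avg_rec_opp u : avg_rec N p u -> avg_rec N p (fun i => - u i).
Proof.
  intros hu m hm. rewrite (hu m hm).
  rewrite (rsum_ext (fun k => p k * - u (m - k)%nat) (fun k => -1 * (p k * u (m - k)%nat)))
    by (intros; ring).
  rewrite rsum_scal_l. ring.
Qed.

Lemma avg_rec_window_bounds u lo hi n :
  avg_rec N p u -> (1 <= n)%nat ->
  (forall i, (n <= i < n + N)%nat -> lo <= u i <= hi) ->
  forall i, (n <= i)%nat -> lo <= u i <= hi.
Proof.
  intros hu hn hwin i. induction i as [i IH] using lt_wf_ind. intros hi_n.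
  destruct (Nat.lt_ge_cases i (n + N)) as [hlt | hge]; [apply hwin; lia|].
  rewrite (hu i) by lia. apply wavg_between. intros k hk. apply IH; lia.
Qed.

Lemma avg_rec_gap_growth u lo n :
  avg_rec N p u -> (1 <= n)%nat -> (forall i, (n <= i)%nat -> lo <= u i) ->
  forall m t, (n + N - 1 <= m)%nat -> p 1%nat ^ t * (u m - lo) <= u (m + t)%nat - lo.
Proof.
  intros hu hn hlo m t hm. induction t as [|t IH]; [rewrite Nat.add_0_r; simpl; lra|].
  assert (step : p 1%nat * (u (m + t)%nat - lo) <= u (m + S t)%nat - lo).
  { rewrite (hu (m + S t)%nat), wavg_sub_const by lia.
    replace (m + t)%nat with (m + S t - 1)%nat by lia.
    apply (rsum_first_le (fun k => p k * (u (m + S t - k)%nat - lo))); [assumption|].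
    intros k hk. apply Rmult_le_pos; [apply p_nonneg; assumption|].
    pose proof (hlo (m + S t - k)%nat ltac:(lia)). lra. }
  pose proof p1_le_1. simpl. nra.
Qed.

Lemma avg_rec_next_window_lower u lo n :
  avg_rec N p u -> (1 <= n)%nat -> (forall i, (n <= i)%nat -> lo <= u i) ->
  forall i, (n + N <= i < n + N + N)%nat ->
    lo + p 1%nat ^ N * (u (n + N - 1)%nat - lo) <= u i.
Proof.
  intros hu hn hlo i hi.
  pose proof (avg_rec_gap_growth u lo n hu hn hlo (n + N - 1) (i - (n + N - 1)) (le_n _))
    as hgap.
  replace (n + N - 1 + (i - (n + N - 1)))%nat with i in hgap by lia.
  assert (p 1%nat ^ N <= p 1%nat ^ (i - (n + N - 1)))
    by (apply pow_le_antimono; [pose proof p1_le_1; lra | lia]).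
  assert (0 <= u (n + N - 1)%nat - lo) by (pose proof (hlo (n + N - 1)%nat ltac:(lia)); lra).
  nra.
Qed.

Definition contraction_rate : R := 1 - p 1%nat ^ N / 2.

Lemma contraction_rate_bounds : 0 < contraction_rate < 1.
Proof.
  unfold contraction_rate. pose proof p1_le_1.
  assert (0 < p 1%nat ^ N) by (apply pow_lt; lra).
  assert (p 1%nat ^ N <= 1) by (rewrite <- (pow1 N); apply pow_incr; lra).
  lra.
Qed.

(* The last term of a window avoids one half of [lo, hi]; the weight [p 1]
   carries it into the next window, which therefore stays [p 1 ^ N (hi - lo) / 2]
   away from the corresponding end. *)
Lemma avg_rec_contract u lo hi n :
  avg_rec N p u -> (1 <= n)%nat ->
  (forall i, (n <= i < n + N)%nat -> lo <= u i <= hi) ->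
  exists lo' hi', lo <= lo' /\ hi' - lo' <= contraction_rate * (hi - lo) /\
    forall i, (n + N <= i < n + N + N)%nat -> lo' <= u i <= hi'.
Proof.
  intros hu hn hwin.
  pose proof (avg_rec_window_bounds u lo hi n hu hn hwin) as hall.
  assert (lo <= hi) by (destruct (hwin n) as [h1 h2]; [lia | lra]).
  assert (0 < p 1%nat ^ N) by (apply pow_lt; lra).
  unfold contraction_rate.
  destruct (Rle_lt_dec ((lo + hi) / 2) (u (n + N - 1)%nat)) as [up | down].
  - exists (lo + p 1%nat ^ N * ((hi - lo) / 2)), hi.
    split; [nra | split; [nra|]]. intros i hi_i. split; [|apply hall; lia].
    pose proof (avg_rec_next_window_lower u lo n hu hn
                  (fun j hj => proj1 (hall j hj)) i hi_i). nra.
  - exists lo, (hi - p 1%nat ^ N * ((hi - lo) / 2)).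
    split; [lra | split; [nra|]]. intros i hi_i. split; [apply hall; lia|].
    pose proof (avg_rec_next_window_lower (fun j => - u j) (- hi) n (avg_rec_opp u hu) hn
                  (fun j hj => Ropp_le_contravar _ _ (proj2 (hall j hj))) i hi_i). nra.
Qed.

Lemma avg_rec_nested_windows u lo0 hi0 :
  avg_rec N p u -> (forall i, (1 <= i <= N)%nat -> lo0 <= u i <= hi0) ->
  forall j, exists lo hi, lo0 <= lo /\ hi - lo <= contraction_rate ^ j * (hi0 - lo0) /\
    forall i, (1 + j * N <= i)%nat -> lo <= u i <= hi.
Proof.
  intros hu hinit.
  assert (windows : forall j, exists lo hi, lo0 <= lo /\
    hi - lo <= contraction_rate ^ j * (hi0 - lo0) /\
    forall i, (1 + j * N <= i < 1 + j * N + N)%nat -> lo <= u i <= hi).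
  { induction j as [|j IH].
    - exists lo0, hi0. simpl. split; [lra | split; [lra|]]. intros; apply hinit; lia.
    - destruct IH as (lo & hi & hlo & hwidth & hwin).
      destruct (avg_rec_contract u lo hi (1 + j * N) hu ltac:(lia) hwin)
        as (lo' & hi' & hlo' & hwidth' & hwin').
      exists lo', hi'. pose proof contraction_rate_bounds.
      split; [lra | split; [simpl; nra|]].
      intros i hi_i. apply hwin'. simpl in hi_i. lia. }
  intros j. destruct (windows j) as (lo & hi & hlo & hwidth & hwin).
  exists lo, hi. split; [assumption | split; [assumption|]].
  apply (avg_rec_window_bounds u lo hi (1 + j * N)); [assumption | lia | assumption].
Qed.

Theorem avg_rec_converges u lo0 hi0 :
  avg_rec N p u -> (forall i, (1 <= i <= N)%nat -> lo0 <= u i <= hi0) ->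
  exists d, lo0 <= d /\
    forall i, (1 <= i)%nat ->
      Rabs (u i - d) <= contraction_rate ^ ((i - 1) / N) * (hi0 - lo0).
Proof.
  intros hu hinit.
  assert (0 <= hi0 - lo0) by (destruct (hinit 1%nat) as [h1 h2]; [lia | lra]).
  pose proof contraction_rate_bounds.
  destruct (squeezed_limit u (fun j => 1 + j * N)%nat contraction_rate (hi0 - lo0) lo0
              ltac:(lra) ltac:(assumption) (avg_rec_nested_windows u lo0 hi0 hu hinit))
    as (d & hd & hconv).
  exists d. split; [assumption|]. intros i hi. apply hconv.
  pose proof (Nat.Div0.mul_div_le (i - 1) N). lia.
Qed.

End AveragingRecurrence.

Lemma pow_mul_geometric_le_Rpower psi mu N :
  1 < psi -> 0 < mu < 1 -> (1 <= N)%nat ->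
  exists r K, 0 < r < 1 /\
    forall n, (1 <= n)%nat -> psi ^ n * mu ^ ((n - 1) / N) <= K * Rpower psi (r * INR n).
Proof.
  intros hpsi hmu hN.
  assert (hL : 0 < ln psi) by (rewrite <- ln_1; apply ln_increasing; lra).
  assert (hM : ln mu < 0) by (rewrite <- ln_1; apply ln_increasing; lra).
  assert (hNR : 1 <= INR N) by (apply (le_INR 1); assumption).
  set (q := ln mu / (INR N * ln psi)).
  assert (hq : q < 0) by (apply Rdiv_neg_pos; nra).
  assert (hMq : ln mu = q * INR N * ln psi) by (unfold q; field; lra).
  (* [psi ^ (1 + q) = psi * mu ^ (1 / N)]; the [Rmax] only keeps [r] positive. *)
  set (r := Rmax (1 / 2) (1 + q)).
  assert (hr : 1 / 2 <= r /\ 1 + q <= r) by (split; [apply Rmax_l | apply Rmax_r]).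
  exists r, (exp (- ln mu)). split; [split; [lra | apply Rmax_lub_lt; lra]|].
  intros n hn. set (j := ((n - 1) / N)%nat).
  assert (hnj : INR n <= INR N * (INR j + 1)).
  { rewrite <- S_INR, <- mult_INR. apply le_INR.
    pose proof (Nat.div_mod_eq (n - 1) N).
    pose proof (Nat.mod_upper_bound (n - 1) N ltac:(lia)). lia. }
  rewrite <- (Rpower_pow n psi), <- (Rpower_pow j mu) by lra. unfold Rpower.
  rewrite <- !exp_plus.
  assert (exponent : INR n * ln psi + INR j * ln mu <= - ln mu + r * INR n * ln psi).
  { assert (0 <= (r - (1 + q)) * INR n * ln psi)
      by (pose proof (pos_INR n); apply Rmult_le_pos; [apply Rmult_le_pos|]; lra).
    assert (q * ln psi * (INR N * (INR j + 1) - INR n) <= 0) by nra.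
    rewrite hMq. nra. }
  destruct (Rle_lt_or_eq_dec _ _ exponent) as [lt | eq].
  - left. apply exp_increasing. lra.
  - rewrite eq. lra.
Qed.

Section PositiveRecurrence.
Variables (N : nat) (c : nat -> R) (psi : R).
Hypothesis N_pos : (1 <= N)%nat.
Hypothesis c_nonneg : forall k, (1 <= k <= N)%nat -> 0 <= c k.
Hypothesis c1_pos : 0 < c 1%nat.
Hypothesis psi_gt_1 : 1 < psi.
Hypothesis psi_root : psi ^ N = rsum_upto (fun k => c k * psi ^ (N - k)) N.

Definition normalized_weight (k : nat) : R := c k / psi ^ k.

Lemma normalized_weight_sum : rsum_upto normalized_weight N = 1.
Proof.
  assert (hN0 : psi ^ N <> 0) by (apply pow_nonzero; lra).
  rewrite (rsum_ext _ (fun k => / psi ^ N * (c k * psi ^ (N - k)))).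
  - rewrite rsum_scal_l, <- psi_root. field. assumption.
  - intros k hk. unfold normalized_weight. rewrite (pow_add_sub psi k N) by lia.
    field. split; apply pow_nonzero; lra.
Qed.

Lemma normalized_avg_rec x :
  (forall m, (N + 1 <= m)%nat -> x m = rsum_upto (fun k => c k * x (m - k)%nat) N) ->
  avg_rec N normalized_weight (fun i => x i / psi ^ i).
Proof.
  intros hx m hm. rewrite (hx m hm).
  rewrite (rsum_ext (fun k => normalized_weight k * (x (m - k)%nat / psi ^ (m - k)))
                    (fun k => / psi ^ m * (c k * x (m - k)%nat))).
  - rewrite rsum_scal_l. field. apply pow_nonzero; lra.
  - intros k hk. unfold normalized_weight. rewrite (pow_add_sub psi k m) by lia.
    field. split; apply pow_nonzero; lra.
Qed.

Theorem pos_recurrence_asymptotics x :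
  (forall m, (N + 1 <= m)%nat -> x m = rsum_upto (fun k => c k * x (m - k)%nat) N) ->
  (forall i, (1 <= i <= N)%nat -> 0 < x i) ->
  exists delta r C, 0 < delta /\ 0 < r < 1 /\
    forall n, (1 <= n)%nat -> Rabs (x n - delta * psi ^ n) <= C * Rpower psi (r * INR n).
Proof.
  intros hrec hpos.
  assert (hpow : forall k, 0 < psi ^ k) by (intros; apply pow_lt; lra).
  assert (hp : forall k, (1 <= k <= N)%nat -> 0 <= normalized_weight k).
  { intros k hk. apply Rmult_le_pos; [apply c_nonneg; assumption|].
    left. apply Rinv_0_lt_compat, hpow. }
  assert (hp1 : 0 < normalized_weight 1%nat) by (apply Rdiv_lt_0_compat; auto).
  set (u := fun i => x i / psi ^ i).
  destruct (finite_pos_bounds u N) as (lo0 & hi0 & hlo0 & hwin).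
  { intros i hi. apply Rdiv_lt_0_compat; auto. }
  assert (0 <= hi0 - lo0) by (destruct (hwin 1%nat) as [h1 h2]; [lia | lra]).
  destruct (avg_rec_converges N normalized_weight N_pos hp normalized_weight_sum hp1
              u lo0 hi0 (normalized_avg_rec x hrec) hwin) as (d & hd & hconv).
  destruct (pow_mul_geometric_le_Rpower psi _ N psi_gt_1
              (contraction_rate_bounds N _ N_pos hp normalized_weight_sum hp1) N_pos)
    as (r & K & hr & hdecay).
  exists d, r, ((hi0 - lo0) * K). split; [lra | split; [assumption|]].
  intros n hn. specialize (hconv n hn). specialize (hdecay n hn).
  replace (x n - d * psi ^ n) with (psi ^ n * (u n - d))
    by (unfold u; field; apply pow_nonzero; lra).
  rewrite Rabs_mult, (Rabs_right (psi ^ n)) by (apply Rle_ge, Rlt_le, hpow).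
  pose proof (Rabs_pos (u n - d)). pose proof (hpow n). nra.
Qed.

End PositiveRecurrence.

Definition rec_coef (N : nat) (a : nat -> nat) (k : nat) : nat :=
  if Nat.eqb k N then (1 + a N)%nat else a k.

Lemma rec_coef_lt N a k : (k <> N)%nat -> rec_coef N a k = a k.
Proof. intros hk. unfold rec_coef. rewrite (proj2 (Nat.eqb_neq k N) hk). reflexivity. Qed.

Lemma rec_coef_last N a : rec_coef N a N = (1 + a N)%nat.
Proof. unfold rec_coef. rewrite Nat.eqb_refl. reflexivity. Qed.

Lemma rsum_rec_coef N a (f : nat -> R) : (1 <= N)%nat ->
  rsum_upto (fun k => INR (rec_coef N a k) * f k) N =
  rsum_upto (fun k => INR (a k) * f k) (N - 1) + (1 + INR (a N)) * f N.
Proof.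
  intros hN. rewrite rsum_last, rec_coef_last, plus_INR by assumption.
  f_equal. apply rsum_ext. intros k hk. rewrite rec_coef_lt by lia. reflexivity.
Qed.

Lemma gpoly_root_char N a psi : (1 <= N)%nat -> gpoly N a psi = 0 ->
  psi ^ N = rsum_upto (fun k => INR (rec_coef N a k) * psi ^ (N - k)) N.
Proof.
  unfold gpoly. intros hN hg. rewrite rsum_rec_coef, Nat.sub_diag by assumption.
  simpl. lra.
Qed.

Lemma gpoly_pos_root_gt_1 N a psi : (2 <= N)%nat -> (0 < a 1)%nat ->
  0 < psi -> gpoly N a psi = 0 -> 1 < psi.
Proof.
  intros hN ha1 hpsi hg. unfold gpoly in hg.
  assert (hfirst : INR (a 1%nat) * psi ^ (N - 1) <=
                   rsum_upto (fun k => INR (a k) * psi ^ (N - k)) (N - 1)).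
  { apply (rsum_first_le (fun k => INR (a k) * psi ^ (N - k))); [lia|].
    intros k hk. apply Rmult_le_pos; [apply pos_INR | apply pow_le; lra]. }
  assert (0 < INR (a 1%nat)) by (apply lt_0_INR; assumption).
  assert (0 < psi ^ (N - 1)) by (apply pow_lt; assumption).
  pose proof (pos_INR (a N)).
  destruct (Rle_lt_dec psi 1) as [le | lt]; [|assumption].
  assert (psi ^ N <= 1) by (rewrite <- (pow1 N); apply pow_incr; lra).
  nra.
Qed.

Lemma rec_coef_recurrence N a (H : nat -> nat) : (1 <= N)%nat ->
  (forall n, (1 <= n)%nat ->
     H (n + N)%nat =
       (nsum_upto (fun k => a k * H (n + N - k)) (N - 1) + (1 + a N) * H n)%nat) ->
  forall m, (N + 1 <= m)%nat ->
    INR (H m) = rsum_upto (fun k => INR (rec_coef N a k) * INR (H (m - k)%nat)) N.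
Proof.
  intros hN Hrec m hm.
  replace m with (m - N + N)%nat by lia.
  rewrite Hrec, rsum_rec_coef, plus_INR, mult_INR, INR_nsum_upto, plus_INR by lia.
  replace (m - N + N - N)%nat with (m - N)%nat by lia.
  f_equal. apply rsum_ext. intros k hk. apply mult_INR.
Qed.

Theorem theorem6p7 (N : nat) (a : nat -> nat) (H : nat -> nat) (psi : R)
  (hN : (2 <= N)%nat) (ha1 : (0 < a 1)%nat)
  (Hinit : forall n, (1 <= n <= N + 1)%nat ->
     H n = (1 + nsum_upto (fun k => a k * H (n - k)) (n - 1))%nat)
  (Hrec : forall n, (1 <= n)%nat ->
     H (n + N)%nat =
       (nsum_upto (fun k => a k * H (n + N - k)) (N - 1) + (1 + a N) * H n)%nat)
  (hpsi : 0 < psi) (hg : gpoly N a psi = 0) :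
  exists delta r C : R, 0 < delta /\ 0 < r /\ r < 1 /\
    forall n : nat, (1 <= n)%nat ->
      Rabs (INR (H n) - delta * psi ^ n) <= C * Rpower psi (r * INR n).
Proof.
  assert (hN1 : (1 <= N)%nat) by lia.
  edestruct (pos_recurrence_asymptotics N (fun k => INR (rec_coef N a k)) psi hN1)
    with (x := fun i => INR (H i))
    as (delta & r & C & hdelta & hr & hbound).
  - intros k _. apply pos_INR.
  - rewrite rec_coef_lt by lia. apply lt_0_INR. assumption.
  - exact (gpoly_pos_root_gt_1 N a psi hN ha1 hpsi hg).
  - exact (gpoly_root_char N a psi hN1 hg).
  - exact (rec_coef_recurrence N a H hN1 Hrec).
  - intros i hi. apply lt_0_INR. rewrite Hinit by lia. lia.
  - exists delta, r, C. split; [assumption | split; [apply hr | split; [apply hr | assumption]]].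
Qed.
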